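(* Let $(X,\Sigma,\mu)$ be a complete $\sigma$-finite measure space, $\mathcal{A}\subseteq\Sigma$ a sub-$\sigma$-algebra with $\mu|_{\mathcal{A}}$ $\sigma$-finite, and $E=E^{\mathcal{A}}$ the conditional expectation. Write $X=B\cup\bigcup_{n\in\mathbb{N}}A_n$, where $\{A_n\}$ is a countable family of pairwise disjoint atoms and $B$ contains no atoms. Let $\Phi,\Psi,\Theta$ be Young functions vanishing only at zero and taking only finite values, such that $\Phi(xy)\le\Psi(x)+\Theta(y)$ for all $x,y\ge0$. If $u\in L^0(\Sigma)$ induces a bounded MCE operator $EM_u:L^{\Phi}(\Sigma)\to L^{\Psi}(\Sigma)$, then (i) $E(u)=0$ $\mu$-a.e. on $B$; (ii) $\sup_{n\in\mathbb{N}} E(u)(A_n)\,\Theta^{-1}\!\left(\frac{1}{\mu(A_n)}\right)<\infty$.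
   Context: A Young function is a convex, even function $\Phi:\mathbb{R}\to[0,\infty]$ with $\Phi(0)=0$, not identically $0$ nor identically $\infty$ on $(0,\infty)$. Its generalized inverse is $\Phi^{-1}(y)=\inf\{x\ge0:\Phi(x)>y\}$. $L^{\Phi}(\Sigma)$ is the Orlicz space of $\Sigma$-measurable $f$ with $\int_X\Phi(kf)\,d\mu<\infty$ for some $k>0$, normed by $\|f\|_\Phi=\inf\{k>0:\int_X\Phi(f/k)d\mu\le1\}$. $E^{\mathcal{A}}f$ is the unique $\mathcal{A}$-measurable function with $\int_A f=\int_A E^{\mathcal{A}}f$ for all $A\in\mathcal{A}$. The MCE operator is $EM_u(f)=E(uf)$. An atom is a set $A$ with $\mu(A)>0$ such that every measurable $F\subset A$ has $\mu(F)=0$ or $\mu(F)=\mu(A)$; a measurable function $g$ is a.e. constant on an atom $A$, with value denoted $g(A)$. *)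

From HB Require Import structures.
From mathcomp Require Import all_boot all_order all_algebra.
From mathcomp Require Import all_classical all_reals all_analysis.
From mathcomp Require Import measurable_realfun.
Set Implicit Arguments. Unset Strict Implicit. Unset Printing Implicit Defensive.
Import Order.TTheory GRing.Theory Num.Theory.
Local Open Scope classical_set_scope.
Local Open Scope ring_scope.

Section Defs.
Context {d : measure_display} {T : measurableType d} {R : realType}.

(* Finite-valued Young function (finite values are a standing hypothesis
   of the theorem, so Phi : R -> R). *)
Definition young_fun (Phi : R -> R) : Prop :=
  (forall x y t, 0 <= t <= 1 ->
     Phi (t * x + (1 - t) * y) <= t * Phi x + (1 - t) * Phi y) /\
  (forall x, Phi (- x) = Phi x) /\
  (forall x, 0 <= Phi x) /\
  Phi 0 = 0 /\
  (exists x, 0 < x /\ Phi x != 0).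

Definition vanishes_only_at_zero (Phi : R -> R) : Prop :=
  forall x, Phi x = 0 -> x = 0.

Definition young_inv (Phi : R -> R) (y : R) : R :=
  inf [set x | 0 <= x /\ y < Phi x].

Definition in_orlicz (mu : set T -> \bar R) (Phi : R -> R) (f : T -> R) : Prop :=
  measurable_fun setT f /\
  exists k : R, 0 < k /\ (\int[mu]_x (Phi (k * f x))%:E < +oo)%E.

Definition orlicz_norm (mu : set T -> \bar R) (Phi : R -> R) (f : T -> R) : R :=
  inf [set k : R | 0 < k /\ (\int[mu]_x (Phi (f x / k))%:E <= 1)%E].

Definition is_sub_sigma_algebra (SA : set (set T)) : Prop :=
  sigma_algebra setT SA /\ SA `<=` measurable.

Definition sigma_finite_on (SA : set (set T)) (mu : set T -> \bar R) : Prop :=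
  exists2 F : (set T)^nat, setT = \bigcup_(i : nat) F i &
    forall i, SA (F i) /\ (mu (F i) < +oo)%E.

Definition SA_measurable (SA : set (set T)) (g : T -> R) : Prop :=
  forall Bo : set R, measurable Bo -> SA (g @^-1` Bo).

Definition SA_measurable_e (SA : set (set T)) (g : T -> \bar R) : Prop :=
  forall Bo : set (\bar R), measurable Bo -> SA (g @^-1` Bo).

Definition condexp_nneg (SA : set (set T)) (mu : {measure set T -> \bar R})
    (h g : T -> \bar R) : Prop :=
  (forall x, (0 <= g x)%E) /\ SA_measurable_e SA g /\
  forall A, SA A -> (\int[mu]_(x in A) h x = \int[mu]_(x in A) g x)%E.

(* g is (a version of) E^SA h : E h = E h^+ - E h^-, both finite a.e. *)
Definition is_condexp (SA : set (set T)) (mu : {measure set T -> \bar R})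
    (h g : T -> R) : Prop :=
  SA_measurable SA g /\
  exists gp gn : T -> \bar R,
    condexp_nneg SA mu (fun x => (Num.max (h x) 0)%:E) gp /\
    condexp_nneg SA mu (fun x => (Num.max (- h x) 0)%:E) gn /\
    {ae mu, forall x, (gp x < +oo)%E /\ (gn x < +oo)%E /\
                      g x = fine (gp x) - fine (gn x)}.

Definition is_atom (SA : set (set T)) (mu : set T -> \bar R) (A : set T) : Prop :=
  SA A /\ (0 < mu A)%E /\
  forall F, SA F -> F `<=` A -> mu F = 0%E \/ mu F = mu A.

Definition bounded_MCE (SA : set (set T)) (mu : {measure set T -> \bar R})
    (Phi Psi : R -> R) (u : T -> R) : Prop :=
  exists C : R, 0 <= C /\
    forall f, in_orlicz mu Phi f ->
      exists g, is_condexp SA mu (fun x => u x * f x) g /\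
        in_orlicz mu Psi g /\
        orlicz_norm mu Psi g <= C * orlicz_norm mu Phi f.

End Defs.

From HB Require Import structures.
From mathcomp Require Import all_boot all_order all_algebra.
From mathcomp Require Import all_classical all_reals all_analysis.
From mathcomp Require Import measurable_realfun.
From mathcomp Require Import ring lra.
Import Order.TTheory GRing.Theory Num.Theory.
Local Open Scope classical_set_scope.
Local Open Scope ring_scope.

(* Testing EM_u on [a 1_F], for an [SA]-set [F] of measure [m] on which [E u >= eps],
   gives [E (u a 1_F) = a E u >= a eps] on [F], hence [Psi (k eps a) <= 1 / m]
   whenever [Phi a <= 1 / m], with [k > 0] depending only on the norm of EM_u.
   Choosing [a] with [Phi a <= 1 / m < Phi (3 a)] and using
   [Phi (x y) <= Psi x + Theta y] then bounds [Theta^-1 (1 / m) <= 6 / (k eps)].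
   On an atom this is (ii). On the nonatomic part [B], a non-null set where
   [E u >= eps] has subsets of arbitrarily small measure [m], for which
   [Theta (6 / (k eps)) < 1 / m] contradicts the bound; so [E u <= 0] on [B],
   and [E u >= 0] follows by replacing [u] with [-u]. *)

Section YoungFunction.
Context {R : realType} {Phi : R -> R} (HPhi : young_fun Phi).

Lemma young_ge0 x : 0 <= Phi x.
Proof. by case: HPhi => _ [_ []]. Qed.

Lemma young0 : Phi 0 = 0.
Proof. by case: HPhi => _ [_ [_ []]]. Qed.

Lemma youngN x : Phi (- x) = Phi x.
Proof. by case: HPhi => _ []. Qed.

Lemma young_normr x : Phi `|x| = Phi x.
Proof. by case: (ler0P x) => // _; rewrite youngN. Qed.

Lemma young_scale_le l x : 0 <= l <= 1 -> Phi (l * x) <= l * Phi x.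
Proof.
case: HPhi => convex _ hl.
by have := convex x 0 l hl; rewrite !mulr0 !addr0 young0 mulr0 addr0.
Qed.

Lemma young_scale_ge l x : 1 <= l -> l * Phi x <= Phi (l * x).
Proof.
move=> l1; have l0 : 0 < l by apply: lt_le_trans l1.
have := @young_scale_le l^-1 (l * x).
rewrite mulKf ?gt_eqF // invr_ge0 ltW //= invf_le1 // => /(_ l1).
by rewrite ler_pdivlMl.
Qed.

Lemma young_le x y : 0 <= x -> x <= y -> Phi x <= Phi y.
Proof.
move=> x0 xy; have [y0|y0] := eqVneq y 0.
  by rewrite y0 (@le_anti _ _ x 0) // -{1}y0 xy x0.
have y0' : 0 < y by rewrite lt_def y0 (le_trans x0 xy).
have hl : 0 <= x / y <= 1 by rewrite divr_ge0 ?ler_pdivrMr ?mul1r // ltW.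
have := young_scale_le _ y hl; rewrite divfK // => /le_trans; apply.
by rewrite ler_piMl ?young_ge0 //; case/andP: hl.
Qed.

Lemma measurable_young : measurable_fun setT Phi.
Proof.
have -> : Phi = (fun x => Phi (Num.max x 0)) \o (@Num.Def.normr _ R).
  by apply/funext => x /=; rewrite max_l // young_normr.
apply: measurableT_comp; last exact: normr_measurable.
apply: nondecreasing_measurable => // x y xy.
by apply: young_le; [rewrite le_max lexx orbT | rewrite ge_max !le_max xy lexx orbT].
Qed.

Hypothesis HPhi0 : vanishes_only_at_zero Phi.

(* Take [a] near the supremum of [{a >= 0 | Phi a <= t}], which is finite
   because [Phi] grows at least linearly beyond [1]. *)
Lemma young_level t : 0 < t ->
  exists a, [/\ 0 <= a, Phi a <= t & t < Phi (3 * a)].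
Proof.
move=> t0.
have p1 : 0 < Phi 1.
  by rewrite lt_def young_ge0 andbT; apply/eqP => /HPhi0/eqP; rewrite oner_eq0.
pose S := [set a | 0 <= a /\ Phi a <= t].
pose a1 := Num.min 1 (t / Phi 1).
have a1p : 0 < a1 by rewrite lt_min ltr01 divr_gt0.
have Sa1 : S a1.
  split; first exact: ltW.
  have := @young_scale_le a1 1; rewrite mulr1 ltW //= ge_min lexx => /(_ isT).
  by move/le_trans; apply; rewrite -ler_pdivlMr // ge_min lexx orbT.
have ubS : ubound S (Num.max 1 (t / Phi 1)).
  move=> a [a0 aT]; rewrite leNgt; apply/negP => ha.
  have a1' : 1 <= a by apply: le_trans (ltW ha); rewrite le_max lexx.
  have := young_scale_ge _ 1 a1'; rewrite mulr1 => /le_trans/(_ aT).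
  rewrite -ler_pdivlMr // leNgt; apply/negP/negPn.
  by apply: le_lt_trans ha; rewrite le_max lexx orbT.
have hs : has_sup S by split; [exists a1 | exists (Num.max 1 (t / Phi 1))].
have sp : 0 < sup S by apply: lt_le_trans (sup_upper_bound hs Sa1).
have [e [e0 et] he] := sup_adherent (divr_gt0 (mulr_gt0 sp (ltr0n _ 2)) (ltr0n _ 3)) hs.
exists e; split => //; rewrite ltNge; apply/negP => h3.
have /(sup_upper_bound hs) : S (3 * e) by split => //; rewrite mulr_ge0.
lra.
Qed.

End YoungFunction.

Section YoungTriple.
Context {R : realType} {Phi Psi Theta : R -> R}.
Hypotheses (HPhi : young_fun Phi) (HPhi0 : vanishes_only_at_zero Phi).
Hypothesis Hyoung : forall x y, 0 <= x -> 0 <= y -> Phi (x * y) <= Psi x + Theta y.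

(* With [Phi a <= t < Phi (3 a)]: if [c y >= 6] then
   [2 t < 2 Phi (3 a) <= Phi (c a y) <= Psi (c a) + Theta y <= 2 t]. *)
Lemma young_triple_lt {t c y : R} : 0 < t -> 0 < c ->
  (forall a, 0 <= a -> Phi a <= t -> Psi (c * a) <= t) ->
  0 <= y -> Theta y <= t -> y < 6 / c.
Proof.
move=> t0 c0 HPsi y0 Ty; rewrite ltNge; apply/negP => hy.
have [a [a0 Pa P3a]] := young_level HPhi HPhi0 _ t0.
have ca0 : 0 <= c * a by rewrite mulr_ge0 // ltW.
have := Hyoung _ _ ca0 y0; have := HPsi a a0 Pa.
have cy : 6 <= c * y by rewrite mulrC -ler_pdivrMr.
have l1 : 1 <= c * y / 3 by lra.
have := young_scale_ge HPhi _ (3 * a) l1.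
have -> : c * y / 3 * (3 * a) = c * a * y by field.
have := young_ge0 HPhi (3 * a); nra.
Qed.

Lemma young_inv_le {t c : R} : 0 < t -> 0 < c ->
  (forall a, 0 <= a -> Phi a <= t -> Psi (c * a) <= t) ->
  young_inv Theta t <= 6 / c.
Proof.
move=> t0 c0 HPsi; apply: ge_inf; first by exists 0 => x [].
have y0 : 0 <= 6 / c by rewrite divr_ge0 // ltW.
split => //; rewrite ltNge; apply/negP => /(young_triple_lt t0 c0 HPsi y0).
by rewrite ltxx.
Qed.

End YoungTriple.

Lemma young_inv_ge0 {R : realType} {Theta : R -> R} {t : R} :
  young_fun Theta -> vanishes_only_at_zero Theta -> 0 < t ->
  0 <= young_inv Theta t.
Proof.
move=> HT HT0 t0; apply: lb_le_inf; last by move=> x [].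
have [a [a0 _ ta]] := young_level HT HT0 _ t0.
by exists (3 * a); split => //; rewrite mulr_ge0.
Qed.

Section SubSigmaAlgebra.
Context {d : measure_display} {T : measurableType d} {R : realType}.
Context {mu : {measure set T -> \bar R}} {SA : set (set T)}.
Hypothesis HSA : is_sub_sigma_algebra SA.

Lemma sub_measurable {A} : SA A -> measurable A.
Proof. by case: HSA => _; apply. Qed.

Lemma sub_set0 : SA set0.
Proof. by case: HSA => -[]. Qed.

Lemma sub_setC {A} : SA A -> SA (~` A).
Proof. by case: HSA => -[_ h _] _ /h; rewrite setTD. Qed.

Lemma sub_bigcup {F : (set T)^nat} : (forall n, SA (F n)) -> SA (\bigcup_n F n).
Proof. by case: HSA => -[_ _ h] _; apply: h. Qed.

Lemma sub_setI {A B} : SA A -> SA B -> SA (A `&` B).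
Proof.
move=> hA hB; rewrite -(setCK A) -(setCK B) -setCU; apply: sub_setC.
rewrite -bigcup2E; apply: sub_bigcup => -[|[|k]] /=;
  [exact: sub_setC | exact: sub_setC | exact: sub_set0].
Qed.

Lemma sub_setD {A B} : SA A -> SA B -> SA (A `\` B).
Proof. by move=> hA hB; rewrite setDE; apply: sub_setI => //; apply: sub_setC. Qed.

Lemma SA_measurable_fun {g : T -> R} : SA_measurable SA g -> measurable_fun setT g.
Proof. by move=> h _ B mB; rewrite setTI; apply: sub_measurable; apply: h. Qed.

Lemma SA_measurable_e_fun {g : T -> \bar R} :
  SA_measurable_e SA g -> measurable_fun setT g.
Proof. by move=> h _ B mB; rewrite setTI; apply: sub_measurable; apply: h. Qed.

Lemma SA_measurableN {g : T -> R} :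
  SA_measurable SA g -> SA_measurable SA (fun x => - g x).
Proof.
move=> h B mB; have := oppr_measurable measurableT mB; rewrite setTI => mNB.
exact: (h _ mNB).
Qed.

Lemma SA_measurable_lt (g : T -> R) r :
  SA_measurable SA g -> SA [set x | g x < r].
Proof.
move=> h; have -> : [set x | g x < r] = g @^-1` [set` `]-oo, r[].
  by apply/seteqP; split => x /=; rewrite in_itv.
by apply: h; exact: measurable_itv.
Qed.

Lemma SA_measurable_ge (g : T -> R) r :
  SA_measurable SA g -> SA [set x | r <= g x].
Proof.
move=> h; have -> : [set x | r <= g x] = ~` [set x | g x < r].
  by apply/seteqP; split => x /=; rewrite leNgt => /negP.
by apply: sub_setC; apply: SA_measurable_lt.
Qed.

Lemma SA_measurable_e_le (g : T -> \bar R) r :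
  SA_measurable_e SA g -> SA [set x | (g x <= r%:E)%E].
Proof.
move=> h; have -> : [set x | (g x <= r%:E)%E] = g @^-1` [set` `]-oo, r%:E]].
  by apply/seteqP; split => x /=; rewrite in_itv.
by apply: h; exact: emeasurable_itv.
Qed.

Lemma measure_subset_lt {A F : set T} : SA A -> SA F -> A `<=` F ->
  (mu F < +oo -> mu A < +oo)%E.
Proof.
move=> SAA SAF AF; apply: le_lt_trans; apply: le_measure => //; rewrite inE;
  [exact: (sub_measurable SAA) | exact: (sub_measurable SAF)].
Qed.

End SubSigmaAlgebra.

Section Orlicz.
Context {d : measure_display} {T : measurableType d} {R : realType}.
Context {mu : {measure set T -> \bar R}} {Phi : R -> R} (HPhi : young_fun Phi).

Lemma measurable_young_comp {f : T -> R} : measurable_fun setT f ->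
  measurable_fun setT (fun x => (Phi (f x))%:E).
Proof.
move=> mf; apply/measurable_EFinP; apply: measurableT_comp mf.
exact: (measurable_young HPhi).
Qed.

Lemma integral_young_indic {F : set T} {m : R} (a : R) : measurable F -> mu F = m%:E ->
  (\int[mu]_x (Phi (a * \1_F x))%:E = (Phi a * m)%:E)%E.
Proof.
move=> mF muF; under eq_integral => x _.
  rewrite (_ : Phi (a * \1_F x) = Phi a * \1_F x); last first.
    by rewrite indicE; case: (x \in F); rewrite ?mulr1 ?mulr0 ?(young0 HPhi).
  rewrite EFinM; over.
rewrite ge0_integralZl ?lee_fin ?(young_ge0 HPhi) //.
  by rewrite integral_indic // setIT muF EFinM.
exact/measurable_EFinP/measurable_indic.
Qed.

Lemma in_orlicz_indic {F : set T} {m : R} (a : R) : measurable F -> mu F = m%:E ->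
  in_orlicz mu Phi (fun x => a * \1_F x).
Proof.
move=> mF muF; split; first exact/measurable_funM/measurable_indic.
exists 1; split => //; under eq_integral => x _ do rewrite mul1r.
by rewrite (integral_young_indic _ mF muF) ltry.
Qed.

Lemma orlicz_norm_indic_le1 {F : set T} {m a : R} :
  measurable F -> mu F = m%:E -> 0 < m -> Phi a <= 1 / m ->
  orlicz_norm mu Phi (fun x => a * \1_F x) <= 1.
Proof.
move=> mF muF m0 Pa; apply: ge_inf; first by exists 0 => k [/ltW].
split => //; under eq_integral => x _ do rewrite divr1.
by rewrite (integral_young_indic _ mF muF) lee_fin -ler_pdivlMr.
Qed.

(* With [L := 1 + int Phi (k f)], convexity gives [Phi (k f / L) <= Phi (k f) / L]. *)
Lemma orlicz_modular_le1 {f : T -> R} : in_orlicz mu Phi f ->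
  exists k : R, 0 < k /\ (\int[mu]_x (Phi (f x / k))%:E <= 1)%E.
Proof.
move=> [mf [k [k0 Ik]]].
set I := (\int[mu]_x _)%E in Ik.
have I0 : (0 <= I)%E by apply: integral_ge0 => x _; rewrite lee_fin (young_ge0 HPhi).
have If : I \is a fin_num by rewrite ge0_fin_numE.
set L := fine I + 1.
have L1 : 1 <= L by rewrite lerDr fine_ge0.
have L0 : 0 < L by apply: lt_le_trans L1.
exists (L / k); split; first exact: divr_gt0.
apply: le_trans (_ : \int[mu]_x ((L^-1)%:E * (Phi (k * f x))%:E) <= _)%E.
  apply: ge0_le_integral => //.
  - by move=> x _; rewrite lee_fin (young_ge0 HPhi).
  - by apply: measurable_young_comp; apply: measurable_funM.
  - apply: emeasurable_funM => //.
    by apply: measurable_young_comp; apply: measurable_funM.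
  - move=> x _; rewrite -EFinM lee_fin.
    have -> : f x / (L / k) = L^-1 * (k * f x) by field; rewrite !gt_eqF.
    by apply: (young_scale_le HPhi); rewrite invr_ge0 (ltW L0) invf_le1.
rewrite ge0_integralZl ?lee_fin ?invr_ge0 ?(ltW L0) //; last first.
- by move=> x _; rewrite lee_fin (young_ge0 HPhi).
- by apply: measurable_young_comp; apply: measurable_funM.
rewrite -/I -(fineK If) -EFinM lee_fin ler_pdivrMl // mulr1.
by rewrite lerDl.
Qed.

Lemma orlicz_norm_lt {f : T -> R} {r : R} : in_orlicz mu Phi f ->
  orlicz_norm mu Phi f < r ->
  exists k : R, [/\ 0 < k, k < r & (\int[mu]_x (Phi (f x / k))%:E <= 1)%E].
Proof.
move=> /orlicz_modular_le1 [k0 Hk0] /(inf_lt (ex_intro _ k0 Hk0)) [k [k0' Ik] kr].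
by exists k.
Qed.

Lemma young_integral_ge {F : set T} {m b : R} {f : T -> R} :
  measurable F -> mu F = m%:E -> measurable_fun setT f -> 0 <= b ->
  {ae mu, forall x, F x -> b <= f x} ->
  ((Phi b * m)%:E <= \int[mu]_x (Phi (f x))%:E)%E.
Proof.
move=> mF muF mf b0 Hbf; rewrite -(integral_young_indic _ mF muF).
apply: ae_ge0_le_integral => //.
- by move=> x _; rewrite lee_fin (young_ge0 HPhi).
- exact/measurable_young_comp/measurable_funM/measurable_indic.
- by move=> x _; rewrite lee_fin (young_ge0 HPhi).
- exact: measurable_young_comp.
apply: filterS Hbf => x Hx _; rewrite lee_fin indicE.
case: (boolP (x \in F)) => [/set_mem/Hx bf|_]; first by rewrite mulr1 (young_le HPhi).
by rewrite mulr0 (young0 HPhi) (young_ge0 HPhi).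
Qed.

Lemma in_orliczN {f : T -> R} : in_orlicz mu Phi f -> in_orlicz mu Phi (fun x => - f x).
Proof.
move=> [mf [k [k0 Ik]]]; split; first exact: measurable_funN.
by exists k; split => //; under eq_integral => x _ do rewrite mulrN (youngN HPhi).
Qed.

Lemma orlicz_normN (f : T -> R) :
  orlicz_norm mu Phi (fun x => - f x) = orlicz_norm mu Phi f.
Proof.
by rewrite /orlicz_norm; under eq_fun => k do under eq_integral => x _ do
  rewrite mulNr (youngN HPhi).
Qed.

End Orlicz.

Section ConditionalExpectation.
Context {d : measure_display} {T : measurableType d} {R : realType}.
Context {mu : {measure set T -> \bar R}} {SA : set (set T)}.
Hypothesis HSA : is_sub_sigma_algebra SA.

Lemma condexp_nneg_ge0 {h g : T -> \bar R} : condexp_nneg SA mu h g ->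
  forall x, (0 <= g x)%E.
Proof. by case. Qed.

Lemma measurable_condexp_nneg {h g : T -> \bar R} : condexp_nneg SA mu h g ->
  measurable_fun setT g.
Proof. by case=> _ [/(SA_measurable_e_fun HSA)]. Qed.

Lemma is_condexpN {h g : T -> R} : is_condexp SA mu h g ->
  is_condexp SA mu (fun x => - h x) (fun x => - g x).
Proof.
case=> /SA_measurableN mg [gp [gn [Hgp [Hgn Hae]]]].
split => //; exists gn, gp; split; last split.
- exact: Hgn.
- suff -> : (fun x => (Num.max (- - h x) 0)%:E) =
            (fun x => (Num.max (h x) 0)%:E :> \bar R) by [].
  by apply/funext => x; rewrite opprK.
- by apply: filterS Hae => x [? [? ->]]; rewrite opprB.
Qed.

Lemma condexp_nneg_scale_on {h : T -> R} {H p P : T -> \bar R} {F : set T} {a : R} :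
  measurable_fun setT h -> 0 <= a ->
  (forall x, F x -> H x = (a * Num.max (h x) 0)%:E) ->
  condexp_nneg SA mu (fun x => (Num.max (h x) 0)%:E) p ->
  condexp_nneg SA mu H P ->
  forall D, SA D -> D `<=` F ->
    (\int[mu]_(x in D) P x = a%:E * \int[mu]_(x in D) p x)%E.
Proof.
move=> mh a0 HF [_ [_ Hp]] [_ [_ HP]] D SAD DF.
rewrite -HP // -Hp // -ge0_integralZl ?lee_fin //.
- by apply: eq_integral => x /set_mem/DF/HF ->; rewrite EFinM.
- exact: (sub_measurable HSA SAD).
- apply/measurable_EFinP/measurable_maxr; last exact: measurable_cst.
  exact: measurable_funS mh.
- by move=> x _; rewrite lee_fin le_max lexx orbT.
Qed.

End ConditionalExpectation.

Section IntegralGap.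
Context {d : measure_display} {T : measurableType d} {R : realType}.
Context (mu : {measure set T -> \bar R}).
Local Open Scope ereal_scope.

(* [a (int_D n + eps mu D) <= a int_D p = int_D P <= int_D N + (a eps / 2) mu D
   = a int_D n + (a eps / 2) mu D], and [int_D n] is finite. *)
Lemma integral_gap_null (D : set T) (p n P N : T -> \bar R) (a eps K : R) :
  measurable D -> mu D < +oo -> (0 < a)%R -> (0 < eps)%R ->
  (forall x, 0 <= p x) -> (forall x, 0 <= n x) ->
  (forall x, 0 <= P x) -> (forall x, 0 <= N x) ->
  measurable_fun D p -> measurable_fun D n ->
  measurable_fun D P -> measurable_fun D N ->
  (forall x, D x -> n x <= K%:E) ->
  \int[mu]_(x in D) P x = a%:E * \int[mu]_(x in D) p x ->
  \int[mu]_(x in D) N x = a%:E * \int[mu]_(x in D) n x ->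
  {ae mu, forall x, D x -> n x + eps%:E <= p x} ->
  {ae mu, forall x, D x -> P x <= N x + (a * eps / 2)%:E} ->
  mu D = 0.
Proof.
move=> mD Dfin a0 e0 p0 n0 P0 N0 mp mn mP mN nK HP HN Hnp HPN.
set c := (a * eps / 2)%R.
have c0 : 0 <= c%:E by rewrite lee_fin /c !mulr_ge0 // ltW.
have e0' : 0 <= eps%:E by rewrite lee_fin ltW.
have Icst r : \int[mu]_(x in D) r%:E = r%:E * mu D by rewrite -integral_cst.
have Iupper : \int[mu]_(x in D) P x <= \int[mu]_(x in D) N x + c%:E * mu D.
  rewrite -Icst -ge0_integralD //.
  apply: ae_ge0_le_integral => //; first by move=> x _; rewrite adde_ge0.
  exact/emeasurable_funD/measurable_cst.
have Ilower : \int[mu]_(x in D) n x + eps%:E * mu D <= \int[mu]_(x in D) p x.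
  rewrite -Icst -ge0_integralD //.
  apply: ae_ge0_le_integral => //; first by move=> x _; rewrite adde_ge0.
  exact/emeasurable_funD/measurable_cst.
have muDf : mu D \is a fin_num by rewrite ge0_fin_numE.
have Inf : \int[mu]_(x in D) n x \is a fin_num.
  rewrite ge0_fin_numE ?integral_ge0 //; apply: le_lt_trans (_ : _ <= K%:E * mu D) _.
    by rewrite -Icst; apply: ge0_le_integral => //; exact: measurable_cst.
  by rewrite -(fineK muDf) -EFinM ltry.
rewrite HP in Iupper.
have := le_trans (lee_wpmul2l (_ : 0 <= a%:E) Ilower) Iupper.
rewrite lee_fin (ltW a0) HN -(fineK muDf) -(fineK Inf) => /(_ isT).
rewrite -!EFinM -EFinD lee_fin /c => h.
have m0 := fine_ge0 (measure_ge0 mu D).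
have ae0 : (0 < a * eps)%R by rewrite mulr_gt0.
suff -> : fine (mu D) = 0%R by []; nra.
Qed.

End IntegralGap.

Lemma ereal_nat_ge {R : realType} {y : \bar R} : (0 <= y)%E -> (y < +oo)%E ->
  exists K : nat, (y <= K%:R%:E)%E.
Proof.
move=> y0 yoo; exists (Num.trunc (fine y)).+1.
by rewrite -(fineK (x := y)) ?ge0_fin_numE // lee_fin ltW // truncnS_gt.
Qed.

Lemma lee_fineBrD {R : realType} (x y : \bar R) (r : R) :
  x \is a fin_num -> y \is a fin_num -> (r <= fine x - fine y) = (y + r%:E <= x)%E.
Proof. by move=> /fineK {2}<- /fineK {2}<-; rewrite -EFinD lee_fin lerBrDl addrC. Qed.

Lemma lee_fineBlD {R : realType} (x y : \bar R) (r : R) :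
  x \is a fin_num -> y \is a fin_num -> (fine x - fine y <= r) = (x <= y + r%:E)%E.
Proof. by move=> /fineK {2}<- /fineK {2}<-; rewrite -EFinD lee_fin lerBlDl addrC. Qed.

Lemma measure0_ae {d : measure_display} {T : measurableType d} {R : realType}
    {mu : {measure set T -> \bar R}} {D : set T} :
  measurable D -> mu D = 0%E -> {ae mu, forall x, ~ D x}.
Proof. by move=> mD D0; exists D; split => // x /= /contrapT. Qed.

Section IndicatorTest.
Context {d : measure_display} {T : measurableType d} {R : realType}.
Context {mu : {measure set T -> \bar R}} {SA : set (set T)}.
Hypothesis HSA : is_sub_sigma_algebra SA.
Context {u : T -> R} {F : set T} {a : R}.
Hypotheses (Hu : measurable_fun setT u) (HF : SA F) (Ffin : (mu F < +oo)%E) (a0 : 0 < a).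
Context {Eu g : T -> R}.
Hypotheses (HEu : is_condexp SA mu u Eu)
           (Hg : is_condexp SA mu (fun x => u x * (a * \1_F x)) g).

Lemma max_indic_scale (h : T -> R) x : F x ->
  (Num.max (h x * (a * \1_F x)) 0)%:E = (a * Num.max (h x) 0)%:E :> \bar R.
Proof.
by move=> Fx; rewrite indicE mem_set // mulr1 maxr_pMr ?(ltW a0) // mulr0 mulrC.
Qed.

Lemma condexp_indic_trunc_null {p n : T -> \bar R} eps (K : nat) : 0 < eps ->
  condexp_nneg SA mu (fun x => (Num.max (u x) 0)%:E) p ->
  condexp_nneg SA mu (fun x => (Num.max (- u x) 0)%:E) n ->
  {ae mu, forall x, F x -> (n x + eps%:E <= p x)%E} ->
  {ae mu, forall x, F x -> g x < a * eps / 2 -> (K%:R%:E < n x)%E}.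
Proof.
move=> e0 Hp Hn Hnp.
pose D := F `&` [set x | g x < a * eps / 2] `&` [set x | (n x <= K%:R%:E)%E].
case: Hg => SAg [P [N [HP [HN Hgae]]]].
have SAD : SA D.
  apply: (sub_setI HSA); first apply: (sub_setI HSA HF).
  - exact: SA_measurable_lt.
  - by apply: SA_measurable_e_le; case: Hn => _ [].
have DF : D `<=` F by move=> x [[]].
suff /(measure0_ae (sub_measurable HSA SAD)) : mu D = 0%E.
  apply: filterS => x notD Fx gx; rewrite ltNge; apply/negP => nK; exact: notD.
apply: (@integral_gap_null _ _ _ mu D p n P N a eps K%:R) => //.
- exact: (sub_measurable HSA SAD).
- exact: (measure_subset_lt HSA SAD HF DF Ffin).
- exact: condexp_nneg_ge0 Hp.
- exact: condexp_nneg_ge0 Hn.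
- exact: condexp_nneg_ge0 HP.
- exact: condexp_nneg_ge0 HN.
- exact: measurable_funS (measurable_condexp_nneg HSA Hp).
- exact: measurable_funS (measurable_condexp_nneg HSA Hn).
- exact: measurable_funS (measurable_condexp_nneg HSA HP).
- exact: measurable_funS (measurable_condexp_nneg HSA HN).
- by move=> x [].
- exact: (condexp_nneg_scale_on HSA Hu (ltW a0) (max_indic_scale u) Hp HP _ SAD DF).
- apply: (condexp_nneg_scale_on HSA (h := fun x => - u x)) Hn HN _ SAD DF => //.
  + exact: measurable_funN.
  + exact: ltW.
  + by move=> x Fx; rewrite -(max_indic_scale (fun x => - u x)) // mulNr.
- by apply: filterS Hnp => x h /DF /h.
- apply: filterS Hgae => x [Pf [Nf gE]] [[_ /= ]]; rewrite gE => /ltW.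
  by rewrite lee_fineBlD ?ge0_fin_numE ?(condexp_nneg_ge0 HP) ?(condexp_nneg_ge0 HN).
Qed.

(* The test function [a 1_F] is [SA]-measurable, so [E(u a 1_F) = a E(u)] on [F];
   the margin [a eps / 2] spares us the uniqueness of conditional expectations. *)
Lemma condexp_indic_ge eps : 0 < eps ->
  {ae mu, forall x, F x -> eps <= Eu x} ->
  {ae mu, forall x, F x -> a * eps / 2 <= g x}.
Proof.
move=> e0 HeEu; case: HEu => _ [p [n [Hp [Hn HEae]]]].
have Hnp : {ae mu, forall x, F x -> (n x + eps%:E <= p x)%E}.
  apply: filterS2 HeEu HEae => x Hx [pf [nf Ex]] /Hx.
  by rewrite Ex lee_fineBrD ?ge0_fin_numE ?(condexp_nneg_ge0 Hp) ?(condexp_nneg_ge0 Hn).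
apply: filterS2 (ae_foralln (fun K => condexp_indic_trunc_null eps K e0 Hp Hn Hnp)) HEae.
move=> x nK [_ [nf _]] Fx; rewrite leNgt; apply/negP => gx.
have [K] := ereal_nat_ge (condexp_nneg_ge0 Hn x) nf.
by rewrite leNgt nK.
Qed.

End IndicatorTest.

Definition condexp_level_bound {d : measure_display} {T : measurableType d}
    {R : realType} (mu : {measure set T -> \bar R}) (SA : set (set T))
    (Phi Psi : R -> R) (Eu : T -> R) (k : R) : Prop :=
  forall F m eps, SA F -> mu F = m%:E -> 0 < m -> 0 < eps ->
    {ae mu, forall x, F x -> eps <= Eu x} ->
    forall a, 0 <= a -> Phi a <= 1 / m -> Psi (k * eps * a) <= 1 / m.

Section BoundedMCE.
Context {d : measure_display} {T : measurableType d} {R : realType}.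
Context {mu : {measure set T -> \bar R}} {SA : set (set T)}.
Hypothesis HSA : is_sub_sigma_algebra SA.
Context {Phi Psi : R -> R} (HPhi : young_fun Phi) (HPsi : young_fun Psi).
Context {u : T -> R}.

Lemma bounded_MCEN : bounded_MCE SA mu Phi Psi u ->
  bounded_MCE SA mu Phi Psi (fun x => - u x).
Proof.
move=> [C [C0 HC]]; exists C; split => // f /(in_orliczN HPhi)/HC [g [Hg Og]].
exists g; split; last by rewrite (orlicz_normN HPhi) in Og.
by under eq_fun => x do rewrite mulNr -mulrN.
Qed.

(* [k := 1 / (2 (C + 1))] for an operator bound [C]: the image of [a 1_F] is
   [>= a eps / 2] on [F] and has Luxemburg norm [< C + 1]. *)
Lemma bounded_MCE_level {Eu : T -> R} : measurable_fun setT u ->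
  bounded_MCE SA mu Phi Psi u -> is_condexp SA mu u Eu ->
  exists2 k : R, 0 < k & condexp_level_bound mu SA Phi Psi Eu k.
Proof.
move=> Hu [C [C0 HC]] HEu; have C1 : 0 < C + 1 by lra.
exists (2 * (C + 1))^-1 => [|F m eps SAF muF m0 e0 HeEu a a0 Pa].
  by rewrite invr_gt0 mulr_gt0.
have m1 : 0 <= 1 / m by rewrite divr_ge0 // ltW.
have [->|/eqP a_neq0] := eqVneq a 0; first by rewrite mulr0 (young0 HPsi).
have {a_neq0}a0 : 0 < a by rewrite lt_def; apply/andP; split => //; apply/eqP.
have mF := sub_measurable HSA SAF.
have [g [Hg [Og Ng]]] := HC _ (in_orlicz_indic HPhi a mF muF).
have Ffin : (mu F < +oo)%E by rewrite muF ltry.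
have Hga := condexp_indic_ge HSA Hu SAF Ffin a0 HEu Hg eps e0 HeEu.
have [k [k0 kC Ik]] : exists k, [/\ 0 < k, k < C + 1 &
    (\int[mu]_x (Psi (g x / k))%:E <= 1)%E].
  apply: (orlicz_norm_lt HPsi) => //; apply: le_lt_trans Ng _.
  have := orlicz_norm_indic_le1 HPhi mF muF m0 Pa; nra.
have mg : measurable_fun setT (fun x => g x / k).
  apply: measurable_funM; last exact: measurable_cst.
  exact: (SA_measurable_fun HSA Hg.1).
have b0 : 0 <= a * eps / 2 / k by rewrite !divr_ge0 ?mulr_ge0 // ltW.
have := young_integral_ge HPsi mF muF mg b0.
have /[swap]/[apply] : {ae mu, forall x, F x -> a * eps / 2 / k <= g x / k}.
  by apply: filterS Hga => x h /h; rewrite ler_pM2r // invr_gt0.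
move=> /le_trans/(_ Ik); rewrite lee_fin -ler_pdivlMr // => /(le_trans _); apply.
have -> : (2 * (C + 1))^-1 * eps * a = a * eps / 2 * (C + 1)^-1.
  by field; rewrite gt_eqF.
have ae0 : 0 < a * eps / 2 by rewrite divr_gt0 ?mulr_gt0.
apply: (young_le HPsi); first by rewrite mulr_ge0 ?invr_ge0 // ltW.
by rewrite ler_pM2l // lef_pV2 ?posrE // ltW.
Qed.

End BoundedMCE.

Section Atoms.
Context {d : measure_display} {T : measurableType d} {R : realType}.
Context {mu : {measure set T -> \bar R}} {SA : set (set T)}.
Hypothesis HSA : is_sub_sigma_algebra SA.

(* An atom meets some [F i] of the cover in positive, hence full, measure. *)
Lemma atom_finite {A} : sigma_finite_on SA mu -> is_atom SA mu A -> (mu A < +oo)%E.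
Proof.
move=> [Fs Fcov Fsfin] [SAA [A0 Aatom]].
have SAAF i : SA (A `&` Fs i) := sub_setI HSA SAA (Fsfin i).1.
have [i Ai0] : exists i, mu (A `&` Fs i) != 0%E.
  apply: contrapT => /forallNP Ai0.
  have {}Ai0 i : mu (A `&` Fs i) = 0%E by apply/eqP/negPn/negP/Ai0.
  have := ae_foralln (fun i => measure0_ae (sub_measurable HSA (SAAF i)) (Ai0 i)).
  case=> N [mN N0 AN]; move: A0; rewrite lt_neqAle eq_sym => /andP[/negP []].
  rewrite -measure_le0 -N0 le_measure ?inE //; first exact: (sub_measurable HSA SAA).
  move=> x Ax; apply: AN => /= notAF.
  have : setT x by []; rewrite Fcov => -[j _ Fj].
  exact: (notAF j).
have [Ai00|Ai] := Aatom _ (SAAF i) (@subIsetl _ _ _); first by rewrite Ai00 eqxx in Ai0.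
rewrite -Ai; apply: (measure_subset_lt HSA (SAAF i) (Fsfin i).1 (@subIsetr _ _ _)).
exact: (Fsfin i).2.
Qed.

Context {B : set T}.
Hypothesis HBnoatom : forall F, F `<=` B -> ~ is_atom SA mu F.

Lemma nonatomic_half {F r} : SA F -> F `<=` B -> mu F = r%:E -> 0 < r ->
  exists G g, [/\ SA G, G `<=` F, mu G = g%:E, 0 < g & 2 * g <= r].
Proof.
move=> SAF FB muF r0.
have [G [SAG GF G0 GF0]] : exists G, [/\ SA G, G `<=` F, mu G != 0%E & mu G != mu F].
  apply: contrapT => hG; apply: (HBnoatom F FB); split => //.
  split; first by rewrite muF lte_fin.
  move=> G SAG GF; have [|] := eqVneq (mu G) 0%E; first by left.
  have [|] := eqVneq (mu G) (mu F); first by right.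
  by move=> ? ?; exfalso; apply: hG; exists G.
have SAFG := sub_setD HSA SAF SAG.
have Ffin : (mu F < +oo)%E by rewrite muF ltry.
have [g muG] : exists g, mu G = g%:E.
  exists (fine (mu G)); rewrite fineK // ge0_fin_numE //.
  exact: (measure_subset_lt HSA SAG SAF GF Ffin).
have [h muFG] : exists h, mu (F `\` G) = h%:E.
  exists (fine (mu (F `\` G))); rewrite fineK // ge0_fin_numE //.
  exact: (measure_subset_lt HSA SAFG SAF (@subDsetl _ _ _) Ffin).
have rgh : r = h + g.
  apply: EFin_inj; rewrite EFinD -muF -muFG -muG -{2}(setIidr GF).
  exact: (measureDI mu (sub_measurable HSA SAF) (sub_measurable HSA SAG)).
have g0 : 0 < g.
  rewrite lt_def -lee_fin -muG measure_ge0 andbT.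
  by apply: contraNneq G0 => g0; rewrite muG g0.
have h0 : 0 < h.
  rewrite lt_def -lee_fin -muFG measure_ge0 andbT.
  by apply: contraNneq GF0 => h0; rewrite muF muG rgh h0 add0r.
have [gh|hg] := leP g h.
  by exists G, g; split => //; lra.
by exists (F `\` G), h; split => //; lra.
Qed.

Lemma nonatomic_halves {F0 r0} : SA F0 -> F0 `<=` B -> mu F0 = r0%:E -> 0 < r0 ->
  forall j, exists F r, [/\ SA F, F `<=` F0, mu F = r%:E, 0 < r &
    r * (2 ^ j)%:R <= r0].
Proof.
move=> SAF0 F0B muF0 r00; elim=> [|j [F [r [SAF FF0 muF r0' rj]]]].
  by exists F0, r0; split; rewrite // expn0 mulr1.
have [G [g [SAG GF muG g0 gr]]] := nonatomic_half SAF (subset_trans FF0 F0B) muF r0'.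
exists G, g; split => //; first exact: subset_trans FF0.
by apply: le_trans rj; rewrite expnS natrM mulrA (mulrC g) ler_wpM2r.
Qed.

Lemma nonatomic_small {F0 r0} (c : R) : SA F0 -> F0 `<=` B -> mu F0 = r0%:E -> 0 < r0 ->
  exists F r, [/\ SA F, F `<=` F0, mu F = r%:E, 0 < r & r * c < 1].
Proof.
move=> SAF0 F0B muF0 r00; have [c0|c0] := leP c 0.
  by exists F0, r0; split => //; apply: le_lt_trans ltr01; rewrite pmulr_rle0.
pose j := (Num.trunc (r0 * c)).+1.
have cj : r0 * c < (2 ^ j)%:R.
  by apply: lt_le_trans (truncnS_gt _) _; rewrite ler_nat ltnW // ltn_expl.
have [F [r [SAF FF0 muF r0' rj]]] := nonatomic_halves SAF0 F0B muF0 r00 j.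
exists F, r; split => //.
rewrite -(ltr_pM2r (_ : 0 < (2 ^ j)%:R)) ?ltr0n ?expn_gt0 // mul1r mulrAC.
by apply: le_lt_trans cj; rewrite ler_pM2r.
Qed.

End Atoms.

Section LevelBound.
Context {d : measure_display} {T : measurableType d} {R : realType}.
Context {mu : {measure set T -> \bar R}} {SA : set (set T)}.
Hypothesis HSA : is_sub_sigma_algebra SA.
Context {Phi Psi Theta : R -> R}.
Hypotheses (HPhi : young_fun Phi) (HPhi0 : vanishes_only_at_zero Phi).
Hypothesis Hyoung : forall x y, 0 <= x -> 0 <= y -> Phi (x * y) <= Psi x + Theta y.
Context {Eu : T -> R} {k : R}.
Hypotheses (HEu : SA_measurable SA Eu) (k0 : 0 < k)
  (Hlevel : condexp_level_bound mu SA Phi Psi Eu k).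

(* If [Eu >= eps := (6 / k + 1) / Theta^-1 (1 / m)] on a non-null, hence full,
   part of the atom, then [young_inv_le] gives [Theta^-1 (1 / m) <= 6 / (k eps)],
   which is smaller. *)
Lemma atom_condexp_bound {A m} :
  young_fun Theta -> vanishes_only_at_zero Theta ->
  is_atom SA mu A -> mu A = m%:E ->
  {ae mu, forall x, A x -> Eu x * young_inv Theta (1 / m) <= 6 / k + 1}.
Proof.
move=> HTheta HTheta0 [SAA [A0 Aatom]] muA.
have m0 : 0 < m by rewrite -lte_fin -muA.
have t0 : 0 < 1 / m by rewrite divr_gt0.
set M := 6 / k + 1; have M0 : 0 < M by rewrite addr_gt0 ?divr_gt0.
set th := young_inv Theta (1 / m).
have [->|th_neq0] := eqVneq th 0; first by apply: aeW => x _; rewrite mulr0 ltW.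
have th0 : 0 < th by rewrite lt_def th_neq0 (young_inv_ge0 HTheta HTheta0 t0).
set eps := M / th; have e0 : 0 < eps by rewrite divr_gt0.
pose P := A `&` [set x | eps <= Eu x].
have SAP : SA P by apply: (sub_setI HSA SAA); exact: SA_measurable_ge.
suff P0 : mu P = 0%E.
  apply: filterS (measure0_ae (sub_measurable HSA SAP) P0) => x notP Ax.
  rewrite leNgt; apply/negP => /ltW; rewrite -ler_pdivrMr // => eE.
  exact: notP.
have [//|PA] := Aatom P SAP (@subIsetl _ _ _).
have := young_inv_le HPhi HPhi0 Hyoung t0 (mulr_gt0 k0 e0)
  (Hlevel _ _ _ SAP (etrans PA muA) m0 e0 (aeW _ (fun x => @proj2 _ _))).
rewrite -/th ler_pdivlMr ?(mulr_gt0 k0 e0) //.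
have -> : th * (k * eps) = 6 + k by rewrite /eps /M; field; rewrite !gt_eqF.
by rewrite gerDl leNgt k0.
Qed.

Context {B : set T}.
Hypothesis HBnoatom : forall F, F `<=` B -> ~ is_atom SA mu F.

(* A subset of measure [r] with [Theta (6 / (k eps)) < 1 / r] contradicts
   [young_triple_lt]. *)
Lemma nonatomic_level_null F eps : SA F -> F `<=` B -> (mu F < +oo)%E ->
  0 < eps -> (forall x, F x -> eps <= Eu x) -> mu F = 0%E.
Proof.
move=> SAF FB Ffin e0 FE; apply: contrapT => F_neq0.
have [r0 muF] : exists r0, mu F = r0%:E.
  by exists (fine (mu F)); rewrite fineK // ge0_fin_numE.
have r00 : 0 < r0.
  rewrite lt_def -lee_fin -muF measure_ge0 andbT.
  by apply: contra_not_neq F_neq0 => r0E; rewrite muF r0E.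
set Y := 6 / (k * eps); have Y0 : 0 <= Y by rewrite divr_ge0 // ltW ?mulr_gt0.
have [G [r [SAG GF muG r0' rY]]] := nonatomic_small HSA HBnoatom (Theta Y) SAF FB muF r00.
have := young_triple_lt HPhi HPhi0 Hyoung (divr_gt0 ltr01 r0') (mulr_gt0 k0 e0)
  (Hlevel _ _ _ SAG muG r0' e0 (aeW _ (fun x => FE x \o GF x))) Y0.
by rewrite ler_pdivlMr // mulrC => /(_ (ltW rY)); rewrite ltxx.
Qed.

Lemma nonatomic_condexp_le0 : SA B -> sigma_finite_on SA mu ->
  {ae mu, forall x, B x -> Eu x <= 0}.
Proof.
move=> SAB [Fs Fcov Fsfin].
pose Q (j i : nat) := B `&` [set x | j.+1%:R^-1 <= Eu x] `&` Fs i.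
have SAQ j i : SA (Q j i).
  apply: (sub_setI HSA) (Fsfin i).1; apply: (sub_setI HSA SAB).
  exact: SA_measurable_ge.
have Q0 j i : mu (Q j i) = 0%E.
  apply: (@nonatomic_level_null _ j.+1%:R^-1 (SAQ j i)).
  - by move=> x [[]].
  - exact: (measure_subset_lt HSA (SAQ j i) (Fsfin i).1 (@subIsetr _ _ _) (Fsfin i).2).
  - by rewrite invr_gt0.
  - by move=> x [[]].
apply: filterS (ae_foralln (fun j => ae_foralln (fun i =>
  measure0_ae (sub_measurable HSA (SAQ j i)) (Q0 j i)))) => x notQ Bx.
rewrite leNgt; apply/negP => Ex.
have : setT x by []; rewrite Fcov => -[i _ Fix].
apply: (notQ (Num.trunc (Eu x)^-1) i); split => //; split => //=.
by rewrite -[leRHS]invrK lef_pV2 ?posrE ?invr_gt0 // ltW // truncnS_gt.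
Qed.

End LevelBound.

Theorem theorem3p3 (d : measure_display) (T : measurableType d) (R : realType)
  (mu : {measure set T -> \bar R})
  (Hcomplete : measure_is_complete mu)
  (Hsfin : sigma_finite setT mu)
  (SA : set (set T)) (HSA : is_sub_sigma_algebra SA)
  (HSAfin : sigma_finite_on SA mu)
  (I : set nat) (Aseq : nat -> set T) (B : set T)
  (Hatoms : forall n, I n -> is_atom SA mu (Aseq n))
  (Hdisj : forall n m, I n -> I m -> n <> m -> Aseq n `&` Aseq m = set0)
  (HB : SA B) (HBdisj : forall n, I n -> B `&` Aseq n = set0)
  (Hcover : setT = B `|` \bigcup_(n in I) Aseq n)
  (HBnoatom : forall F, F `<=` B -> ~ is_atom SA mu F)
  (Phi Psi Theta : R -> R)
  (HPhi : young_fun Phi) (HPsi : young_fun Psi) (HTheta : young_fun Theta)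
  (HPhi0 : vanishes_only_at_zero Phi) (HPsi0 : vanishes_only_at_zero Psi)
  (HTheta0 : vanishes_only_at_zero Theta)
  (Hyoung : forall x y, 0 <= x -> 0 <= y -> Phi (x * y) <= Psi x + Theta y)
  (u : T -> R) (Hu : measurable_fun setT u)
  (Hbdd : bounded_MCE SA mu Phi Psi u)
  (Eu : T -> R) (HEu : is_condexp SA mu u Eu) :
  {ae mu, forall x, B x -> Eu x = 0} /\
  exists M : R, forall n, I n ->
    {ae mu, forall x, Aseq n x ->
       Eu x * young_inv Theta (1 / fine (mu (Aseq n))) <= M}.
Proof.
have SAEu := HEu.1.
have [k k0 Hk] := bounded_MCE_level HSA HPhi HPsi Hu Hbdd HEu.
split.
  have [k' k'0 Hk'] := bounded_MCE_level HSA HPhi HPsi (measurable_funN Hu)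
    (bounded_MCEN HPhi Hbdd) (is_condexpN HEu).
  have := nonatomic_condexp_le0 HSA HPhi HPhi0 Hyoung SAEu k0 Hk HBnoatom HB HSAfin.
  have := nonatomic_condexp_le0 HSA HPhi HPhi0 Hyoung (SA_measurableN SAEu) k'0 Hk'
    HBnoatom HB HSAfin.
  apply: filterS2 => x Nle le Bx; apply/le_anti.
  by rewrite le // -oppr_le0 Nle.
exists (6 / k + 1) => n In.
have Afin := atom_finite HSA HSAfin (Hatoms n In).
apply: (atom_condexp_bound HSA HPhi HPhi0 Hyoung SAEu k0 Hk HTheta HTheta0 (Hatoms n In)).
by rewrite fineK // ge0_fin_numE.
Qed.
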